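(* Let $\mathcal L$ be a purely resolving class of left $R$-modules. Then every $\mathcal L$-atomic module belonging to $\mathcal L$ is Mittag-Leffler.
   Context: $R$ is a ring with $1$; modules are left $R$-modules. pp formulas, ${\rm pp}_M(\bar m)$ as usual; for a class $\mathcal X$, $\phi\le_{\mathcal X}\psi$ means $\phi(X)\subseteq\psi(X)$ for all $X\in\mathcal X$. $M$ is $\mathcal X$-atomic if for every finite tuple $\bar m$ in $M$ there is $\phi\in{\rm pp}_M(\bar m)$ with $\phi\le_{\mathcal X}\psi$ for all $\psi\in{\rm pp}_M(\bar m)$. A module is Mittag-Leffler iff it is $R\text{-Mod}$-atomic (this characterization may serve as definition). A module is purely generated by $\mathcal B$ if it is a pure-epimorphic image of a direct sum of modules from $\mathcal B$; $\mathrm{PGen}\,\mathcal B$ is the class of all such; a class is purely resolving if it equals $\mathrm{PGen}\,\mathcal B$ for some class $\mathcal B$ of pure-projective modules closed under finite direct sums. *)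

From HB Require Import structures.
From mathcomp Require Import all_boot all_order all_algebra.
Unset Printing Implicit Defensive.
Import GRing.Theory.
Local Open Scope ring_scope.

Section ModTheory.
Variable R : pzRingType.

Definition is_linear {U V : lmodType R} (f : U -> V) : Prop :=
  forall (a : R) (x y : U), f (a *: x + y) = a *: f x + f y.

(* A pp formula phi(x_0..x_{n-1}) := exists y_0..y_{m-1},
   /\_{i<k} sum_j A i j x_j + sum_l B i l y_l = 0. *)
Record ppf (n : nat) := PPF {

  pp_k : nat; pp_m : nat;
  pp_A : 'M[R]_(pp_k, n);
  pp_B : 'M[R]_(pp_k, pp_m) }.
Arguments pp_k {n}. Arguments pp_m {n}. Arguments pp_A {n}. Arguments pp_B {n}.

Definition pp_eqs {n} (phi : ppf n) {M : lmodType R}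
  (x : 'I_n -> M) (y : 'I_(pp_m phi) -> M) : Prop :=
  forall i : 'I_(pp_k phi),
    \sum_(j < n) pp_A phi i j *: x j + \sum_(l < pp_m phi) pp_B phi i l *: y l = 0.

Definition pp_holds {n} (phi : ppf n) {M : lmodType R} (x : 'I_n -> M) : Prop :=
  exists y : 'I_(pp_m phi) -> M, pp_eqs phi x y.

Definition mclass := lmodType R -> Prop.

Definition pp_le (X : mclass) {n} (phi psi : ppf n) : Prop :=
  forall N : lmodType R, X N -> forall x : 'I_n -> N, pp_holds phi x -> pp_holds psi x.

Definition atomic (X : mclass) (M : lmodType R) : Prop :=
  forall n (m : 'I_n -> M), exists phi : ppf n,
    pp_holds phi m /\ forall psi : ppf n, pp_holds psi m -> pp_le X phi psi.

Definition mittag_leffler (M : lmodType R) : Prop := atomic (fun _ => True) M.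

(* pure epimorphism: a surjective linear map whose kernel is a pure submodule *)
Definition pure_epi {U V : lmodType R} (p : U -> V) : Prop :=
  [/\ is_linear p, (forall v, exists u, p u = v) &
      forall n (phi : ppf n) (a : 'I_n -> U), (forall j, p (a j) = 0) ->
        pp_holds phi a ->
        exists y : 'I_(pp_m phi) -> U, (forall l, p (y l) = 0) /\ pp_eqs phi a y].

Definition pure_projective (P : lmodType R) : Prop :=
  forall (U V : lmodType R) (g : U -> V), pure_epi g ->
  forall f : P -> V, is_linear f ->
  exists h : P -> U, is_linear h /\ forall x, g (h x) = f x.

Definition is_dsum {I : Type} {B : I -> lmodType R} {S : lmodType R}
  (iota : forall i, B i -> S) : Prop :=
  (forall i, is_linear (iota i)) /\
  forall (N : lmodType R) (f : forall i, B i -> N), (forall i, is_linear (f i)) ->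
    exists g : S -> N, [/\ is_linear g, (forall i x, g (iota i x) = f i x) &
      forall g' : S -> N, is_linear g' -> (forall i x, g' (iota i x) = f i x) ->
        forall s, g' s = g s].

Definition PGen (Bc : mclass) : mclass := fun M =>
  exists (I : Type) (B : I -> lmodType R) (S : lmodType R)
         (iota : forall i, B i -> S) (p : S -> M),
    (forall i, Bc (B i)) /\ is_dsum iota /\ pure_epi p.

Definition fin_dsum_closed (Bc : mclass) : Prop :=
  forall (I : finType) (B : I -> lmodType R) (S : lmodType R)
         (iota : forall i, B i -> S),
    (forall i, Bc (B i)) -> is_dsum iota -> Bc S.

Definition purely_resolving (L : mclass) : Prop :=
  exists Bc : mclass,
    [/\ forall P, Bc P -> pure_projective P, fin_dsum_closed Bc &
        forall M, L M <-> PGen Bc M].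

End ModTheory.
Arguments purely_resolving {R}. Arguments atomic {R}. Arguments mittag_leffler {R}.
Arguments PGen {R}. Arguments pure_projective {R}. Arguments fin_dsum_closed {R}.
Arguments pp_le {R}. Arguments pp_holds {R n}. Arguments pp_eqs {R n}. Arguments pure_epi {R U V}.
Arguments is_dsum {R I B S}. Arguments is_linear {R U V}.

(* Write L = PGen B with B pure-projective, and let p : S -> M be a pure
   epimorphism from a direct sum S of modules in B onto M in L.  Then S lies in
   L and is pure-projective.  For a tuple m of M, L-atomicity provides phi in
   pp(m) below pp(m) on L, and purity lifts m to a tuple s of S satisfying phi.
   Since pure-projective modules are Mittag-Leffler, some phi' in pp(s) is below
   pp(s) in every module; phi' lies in pp(m), and every psi in pp(m) holds of
   s (as phi <=_L psi and S is in L), hence lies above phi'.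

   It then proves "pure-projective => Mittag-Leffler"
   via a pure epimorphism onto P from a span of generic tuples inside a product
   of P with one counterexample module for each potential failure. *)
From HB Require Import structures.
From mathcomp Require Import all_boot all_order all_algebra.
From mathcomp Require Import boolp.
Unset Printing Implicit Defensive.
Import GRing.Theory.
Local Open Scope ring_scope.

#[local] Arguments pp_k {R n} _.
#[local] Arguments pp_m {R n} _.
#[local] Arguments pp_A {R n} _.
#[local] Arguments pp_B {R n} _.
#[local] Arguments pp_eqs {R n} _ {M} _ _.
#[local] Arguments pp_holds {R n} _ {M} _.

(* Concatenation of tuples; a pp formula is handled through the concatenation
   of its free and its bound variables. *)
Definition tcat {T : Type} {n m : nat} (x : 'I_n -> T) (y : 'I_m -> T) :
  'I_(n + m) -> T :=
  fun l => match split l with inl a => x a | inr b => y b end.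

Lemma tcatl {T : Type} {n m : nat} (x : 'I_n -> T) (y : 'I_m -> T) (a : 'I_n) :
  tcat x y (lshift m a) = x a.
Proof. by rewrite /tcat (unsplitK (inl a : 'I_n + 'I_m)). Qed.

Lemma tcatr {T : Type} {n m : nat} (x : 'I_n -> T) (y : 'I_m -> T) (b : 'I_m) :
  tcat x y (rshift n b) = y b.
Proof. by rewrite /tcat (unsplitK (inr b : 'I_n + 'I_m)). Qed.

Lemma tcat_split {T : Type} {n m : nat} (w : 'I_(n + m) -> T) :
  tcat (fun a => w (lshift m a)) (fun b => w (rshift n b)) = w.
Proof.
by apply: funext => l; rewrite -(splitK l); case: (split l) => a; rewrite ?tcatl ?tcatr.
Qed.

Section ModuleSums.
Context {R : pzRingType} {M : lmodType R}.

Lemma sum_tcat n m (c : 'I_(n + m) -> R) (x : 'I_n -> M) (y : 'I_m -> M) :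
  \sum_l c l *: tcat x y l =
  \sum_a c (lshift m a) *: x a + \sum_b c (rshift n b) *: y b.
Proof.
by rewrite big_split_ord; congr (_ + _); apply: eq_bigr => a _; rewrite ?tcatl ?tcatr.
Qed.

Lemma sum_idmx k (t : 'I_k -> M) i : \sum_j (1%:M : 'M[R]_k) i j *: t j = t i.
Proof.
rewrite (bigD1 i) //= mxE eqxx scale1r big1 ?addr0 // => j /negbTE nji.
by rewrite mxE eq_sym nji scale0r.
Qed.

Lemma pp_eqs0 n (phi : ppf R n) : pp_eqs phi (fun _ => 0 : M) (fun _ => 0).
Proof. by move=> i; rewrite !big1 ?addr0 // => l _; rewrite scaler0. Qed.

End ModuleSums.

Section LinearMaps.
Context {R : pzRingType} {U V : lmodType R} {f : U -> V}.
Hypothesis f_lin : is_linear f.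

Lemma lin0 : f 0 = 0.
Proof.
have E := f_lin 1 0 0; rewrite !scale1r addr0 in E.
by apply: (addrI (f 0)); rewrite addr0 -E.
Qed.

Lemma linD x y : f (x + y) = f x + f y.
Proof. by rewrite -{1}(scale1r x) f_lin scale1r. Qed.

Lemma linZ a x : f (a *: x) = a *: f x.
Proof. by rewrite -(addr0 (a *: x)) f_lin lin0 addr0. Qed.

Lemma linB x y : f (x - y) = f x - f y.
Proof. by rewrite linD -scaleN1r linZ scaleN1r. Qed.

Lemma lin_sum (I : Type) (r : seq I) (P : pred I) (F : I -> U) :
  f (\sum_(i <- r | P i) F i) = \sum_(i <- r | P i) f (F i).
Proof. exact: (big_morph f linD lin0). Qed.

Lemma pp_eqs_map {n} {phi : ppf R n} {x y} :
  pp_eqs phi x y -> pp_eqs phi (fun j => f (x j)) (fun l => f (y l)).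
Proof.
move=> Hxy i; have := congr1 f (Hxy i); rewrite lin0 linD !lin_sum => E.
by apply: (etrans _ E); congr (_ + _); apply: eq_bigr => j _; rewrite linZ.
Qed.

Lemma pp_holds_map {n} {phi : ppf R n} {x : 'I_n -> U} :
  pp_holds phi x -> pp_holds phi (fun j => f (x j)).
Proof. by case=> y /pp_eqs_map Hy; exists (fun l => f (y l)). Qed.

Lemma pp_eqs_inj {n} {phi : ppf R n} {x y} : injective f ->
  pp_eqs phi (fun j => f (x j)) (fun l => f (y l)) -> pp_eqs phi x y.
Proof.
move=> f_inj Hf i; apply: f_inj; rewrite lin0 linD !lin_sum.
by apply: (etrans _ (Hf i)); congr (_ + _); apply: eq_bigr => j _; rewrite linZ.
Qed.

End LinearMaps.

Section PureEpimorphisms.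
Context {R : pzRingType}.

Definition lifts_pp {U V : lmodType R} (g : U -> V) : Prop :=
  forall n (phi : ppf R n) (b : 'I_n -> V), pp_holds phi b ->
  exists u : 'I_n -> U, (forall a, g (u a) = b a) /\ pp_holds phi u.

(* Lift the tuple and its witnesses
   arbitrarily; the error terms lie in the kernel and satisfy a pp formula
   there, so purity provides a correcting witness inside the kernel. *)
Lemma pure_epi_lifts_pp {U V : lmodType R} {g : U -> V} : pure_epi g -> lifts_pp g.
Proof.
case=> g_lin g_onto g_pure n phi b [y Hy].
have [u0 Hu0] := choice (fun a => g_onto (b a)).
have [v0 Hv0] := choice (fun l => g_onto (y l)).
pose k i := \sum_j pp_A phi i j *: u0 j + \sum_l pp_B phi i l *: v0 l.
have gk i : g (k i) = 0.
  rewrite /k (linD g_lin) !(lin_sum g_lin).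
  under eq_bigr do rewrite (linZ g_lin) Hu0.
  by under [X in _ + X]eq_bigr do rewrite (linZ g_lin) Hv0; exact: Hy.
(* chi(z) says that z is the value of the equations of phi at some tuple *)
pose chi := @PPF R (pp_k phi) (pp_k phi) (n + pp_m phi) 1%:M
                 (- row_mx (pp_A phi) (pp_B phi)).
have chiE (x : 'I_n -> U) (z : 'I_(pp_m phi) -> U) i :
    \sum_l (- row_mx (pp_A phi) (pp_B phi)) i l *: tcat x z l
    = - (\sum_j pp_A phi i j *: x j + \sum_l pp_B phi i l *: z l).
  rewrite sum_tcat opprD -!sumrN.
  by congr (_ + _); apply: eq_bigr => j _; rewrite mxE ?row_mxEl ?row_mxEr scaleNr.
have [w [gw Hw]] : exists w, (forall l, g (w l) = 0) /\ pp_eqs chi k w.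
  apply: g_pure => //; exists (tcat u0 v0) => i.
  by rewrite /= sum_idmx chiE subrr.
exists (fun a => u0 a - w (lshift _ a)); split.
  by move=> a; rewrite (linB g_lin) Hu0 gw subr0.
exists (fun l => v0 l - w (rshift _ l)) => i.
have E := Hw i; rewrite /= sum_idmx -[w]tcat_split chiE in E.
apply: (etrans _ E); rewrite opprD addrACA -!sumrB.
by congr (_ + _); apply: eq_bigr => j _; rewrite scalerBr.
Qed.

(* Conversely, a linear map lifting pp formulas is a pure epimorphism:
   surjectivity lifts the trivial formula, and a pp formula satisfied by a
   kernel tuple is corrected by a lift of the images of its witnesses. *)
Lemma lifts_pp_pure_epi {U V : lmodType R} {g : U -> V} :
  is_linear g -> lifts_pp g -> pure_epi g.
Proof.
move=> g_lin g_lifts; split => // [v | n phi a ga [v Hv]].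
  pose top := @PPF R 1 0 0 0 0.
  have [u [gu _]] : exists u : 'I_1 -> U, (forall a, g (u a) = v) /\ pp_holds top u.
    by apply: g_lifts; exists (fun _ => 0) => -[].
  by exists (u ord0).
(* the images of the witnesses satisfy the B-part of the equations *)
pose chi := @PPF R (pp_m phi) (pp_k phi) 0 (pp_B phi) 0.
have [v' [gv' [z Hz]]] : exists v' : 'I_(pp_m phi) -> U,
    (forall l, g (v' l) = g (v l)) /\ pp_holds chi v'.
  apply: g_lifts; exists (fun _ => 0) => i.
  have := pp_eqs_map g_lin Hv i; rewrite /= big_ord0 addr0.
  by rewrite big1 ?add0r // => j _; rewrite ga scaler0.
exists (fun l => v l - v' l); split => [l | i].
  by rewrite (linB g_lin) gv' subrr.
have := Hz i; rewrite /= big_ord0 addr0 => E.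
have := congr2 (fun p q => p - q) (Hv i) E; rewrite subrr => E'.
apply: (etrans _ E'); rewrite -addrA -sumrB.
by congr (_ + _); apply: eq_bigr => l _; rewrite scalerBr.
Qed.

(* The identity is a pure epimorphism (every module is in PGen of itself). *)
Lemma id_pure_epi {U : lmodType R} : pure_epi (fun x : U => x).
Proof.
split=> // [v | n phi a a0 _]; first by exists v.
have -> : a = (fun _ => 0) by apply: funext.
by exists (fun _ => 0); split => //; exact: pp_eqs0.
Qed.

End PureEpimorphisms.

(* A direct sum of pure-projective modules is pure-projective: lift each
   restriction separately and glue with the universal property. *)
Lemma dsum_pure_projective {R : pzRingType} {I : Type} {B : I -> lmodType R}
    {S : lmodType R} {iota : forall i, B i -> S} :
  is_dsum iota -> (forall i, pure_projective (B i)) -> pure_projective S.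
Proof.
case=> iota_lin S_univ B_pproj U V g g_pure f f_lin.
have g_lin : is_linear g by case: g_pure.
have fi_lin i : is_linear (fun x => f (iota i x)).
  by move=> a x y; rewrite iota_lin f_lin.
pose lift i := cid (B_pproj i U V g g_pure _ (fi_lin i)).
pose h i := sval (lift i).
have hP i : is_linear (h i) /\ forall x, g (h i x) = f (iota i x) := svalP (lift i).
have [G [G_lin G_iota _]] := S_univ U h (fun i => (hP i).1).
exists G; split => // s.
have [f0 [_ _ uniq_f]] := S_univ V _ fi_lin.
rewrite (uniq_f (fun s => g (G s))) ?(uniq_f f) // => [a x y | i x].
  by rewrite G_lin g_lin.
by rewrite G_iota (hP i).2.
Qed.

Section PPDefinable.
Context {R : pzRingType}.

Definition pp_definable {n} (Q : forall M : lmodType R, ('I_n -> M) -> Prop) :=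
  exists phi : ppf R n, forall (M : lmodType R) (x : 'I_n -> M),
    pp_holds phi x <-> Q M x.

Lemma pp_definable_eqv {n} {Q Q' : forall M : lmodType R, ('I_n -> M) -> Prop} :
  pp_definable Q -> (forall M x, Q M x <-> Q' M x) -> pp_definable Q'.
Proof. by case=> phi H E; exists phi => M x; rewrite H; exact: E. Qed.

Lemma pp_definable_lin {n k} (A : 'M[R]_(k, n)) :
  pp_definable (fun M x => forall i, \sum_j A i j *: x j = 0).
Proof.
exists (@PPF R n k 0 A 0) => M x.
have E (y : 'I_0 -> M) i : \sum_l (0 : 'M[R]_(k, 0)) i l *: y l = 0 by rewrite big_ord0.
split=> [[y Hy] i | Hx]; first by have := Hy i; rewrite /= E addr0.
by exists (fun _ => 0) => i; rewrite /= E addr0; exact: Hx.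
Qed.

Lemma pp_definable_eqs {n} (phi : ppf R n) :
  pp_definable (fun M (y : 'I_(n + pp_m phi) -> M) =>
     pp_eqs phi (fun a => y (lshift _ a)) (fun b => y (rshift _ b))).
Proof.
apply: (pp_definable_eqv (pp_definable_lin (row_mx (pp_A phi) (pp_B phi)))).
move=> M y; split=> H i; have := H i; rewrite big_split_ord => E; apply: etrans E;
  by congr (_ + _); apply: eq_bigr => j _; rewrite ?row_mxEl ?row_mxEr.
Qed.

(* Conjunction: stack the equations and take disjoint witnesses. *)
Lemma pp_definable_conj {n} {Q1 Q2 : forall M : lmodType R, ('I_n -> M) -> Prop} :
  pp_definable Q1 -> pp_definable Q2 -> pp_definable (fun M x => Q1 M x /\ Q2 M x).
Proof.
case=> [[k1 m1 A1 B1] H1] [[k2 m2 A2 B2] H2].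
exists (@PPF R n (k1 + k2) (m1 + m2) (col_mx A1 A2) (block_mx B1 0 0 B2)) => M x.
have Eu (y1 : 'I_m1 -> M) y2 i :
    \sum_j col_mx A1 A2 (lshift k2 i) j *: x j
    + \sum_l block_mx B1 0 0 B2 (lshift k2 i) l *: tcat y1 y2 l
    = \sum_j A1 i j *: x j + \sum_l B1 i l *: y1 l.
  rewrite sum_tcat (eq_bigr _ (fun j _ => congr1 (fun c => c *: x j) (col_mxEu _ _ _ _))).
  rewrite [X in _ + (_ + X)]big1 ?addr0 => [|l _]; last by rewrite block_mxEur mxE scale0r.
  by congr (_ + _); apply: eq_bigr => l _; rewrite block_mxEul.
have Ed (y1 : 'I_m1 -> M) y2 i :
    \sum_j col_mx A1 A2 (rshift k1 i) j *: x j
    + \sum_l block_mx B1 0 0 B2 (rshift k1 i) l *: tcat y1 y2 l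
    = \sum_j A2 i j *: x j + \sum_l B2 i l *: y2 l.
  rewrite sum_tcat (eq_bigr _ (fun j _ => congr1 (fun c => c *: x j) (col_mxEd _ _ _ _))).
  rewrite [X in _ + (X + _)]big1 ?add0r => [|l _]; last by rewrite block_mxEdl mxE scale0r.
  by congr (_ + _); apply: eq_bigr => l _; rewrite block_mxEdr.
split.
- case=> y Hy; rewrite -[y]tcat_split in Hy; split.
  + by apply/H1; exists (fun l => y (lshift m2 l)) => i; have := Hy (lshift k2 i); rewrite Eu.
  + by apply/H2; exists (fun l => y (rshift m1 l)) => i; have := Hy (rshift k1 i); rewrite Ed.
- case=> /H1 [y1 Hy1] /H2 [y2 Hy2]; exists (tcat y1 y2) => i /=.
  rewrite -(splitK i); case: (split i) => [i1|i2] /=; [rewrite Eu; exact: Hy1|].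
  by rewrite Ed; exact: Hy2.
Qed.

(* Existential quantification over the last variables: they become witnesses. *)
Lemma pp_definable_ex {n m'} {Q : forall M : lmodType R, ('I_(n + m') -> M) -> Prop} :
  pp_definable Q -> pp_definable (fun M x => exists y : 'I_m' -> M, Q M (tcat x y)).
Proof.
case=> [[k m A B] H].
exists (@PPF R n k (m' + m) (lsubmx A) (row_mx (rsubmx A) B)) => M x.
have E (y : 'I_m' -> M) (z : 'I_m -> M) i :
    \sum_j A i j *: tcat x y j + \sum_l B i l *: z l =
    \sum_j lsubmx A i j *: x j + \sum_l row_mx (rsubmx A) B i l *: tcat y z l.
  rewrite !sum_tcat -!addrA; congr (_ + _); first by apply: eq_bigr => j _; rewrite mxE.
  by congr (_ + _); apply: eq_bigr => j _; rewrite ?row_mxEl ?row_mxEr ?mxE.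
split.
- case=> w Hw; rewrite -[w]tcat_split in Hw.
  exists (fun l => w (lshift m l)); apply/H.
  by exists (fun l => w (rshift m' l)) => i; rewrite /= E; exact: Hw.
- by case=> y /H [z Hz]; exists (tcat y z) => i /=; rewrite -E; exact: Hz.
Qed.

Lemma pp_definable_reidx {n n'} (s : 'I_n -> 'I_n')
    {Q : forall M : lmodType R, ('I_n -> M) -> Prop} :
  pp_definable Q -> pp_definable (fun M (x : 'I_n' -> M) => Q M (fun j => x (s j))).
Proof.
case=> [[k m A B] H].
exists (@PPF R n' k m (\matrix_(i, j') \sum_(j | s j == j') A i j) B) => M x.
have E i : \sum_j' (\matrix_(i, j') \sum_(j | s j == j') A i j) i j' *: x j'
           = \sum_j A i j *: x (s j).
  rewrite (partition_big s xpredT) //=; apply: eq_bigr => j' _.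
  by rewrite mxE scaler_suml; apply: eq_bigr => j /eqP <-.
split=> [[y Hy] | /H [y Hy]]; last by exists y => i; rewrite /= E; exact: Hy.
by apply/H; exists y => i; rewrite /= -E; exact: Hy.
Qed.

Lemma pp_definable_subst {N n} (C : 'M[R]_(N, n))
    {Q : forall M : lmodType R, ('I_N -> M) -> Prop} :
  pp_definable Q ->
  pp_definable (fun M (x : 'I_n -> M) => Q M (fun i => \sum_j C i j *: x j)).
Proof.
move=> HQ.
have Hlin := pp_definable_lin (row_mx (- C) 1%:M).
have HQ' := pp_definable_reidx (@rshift n N) HQ.
apply: (pp_definable_eqv (pp_definable_ex (pp_definable_conj Hlin HQ'))) => M x /=.
set Cx := fun i => \sum_j C i j *: x j.
have E (w : 'I_N -> M) i :
    \sum_j row_mx (- C) 1%:M i j *: tcat x w j = - Cx i + w i.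
  rewrite sum_tcat /Cx -sumrN -[w i]sum_idmx.
  by congr (_ + _); apply: eq_bigr => j _; rewrite ?row_mxEl ?row_mxEr // mxE scaleNr.
have Ew (w : 'I_N -> M) : (fun j => tcat x w (rshift n j)) = w.
  by apply: funext => j; rewrite tcatr.
split.
- case=> w []; rewrite Ew => Hw; suff -> : w = Cx by [].
  by apply: funext => i; apply/eqP; rewrite -subr_eq0 addrC -E Hw.
- by move=> HCx; exists Cx; rewrite Ew; split => // i; rewrite E addNr.
Qed.

End PPDefinable.

Section Product.
Context {R : pzRingType} {I : Type} (N : I -> lmodType R).

Definition prodmod := forall i, N i.
HB.instance Definition _ := gen_eqMixin prodmod.
HB.instance Definition _ := gen_choiceMixin prodmod.

Definition prod_zero : prodmod := fun i => 0.
Definition prod_opp (x : prodmod) : prodmod := fun i => - x i.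
Definition prod_add (x y : prodmod) : prodmod := fun i => x i + y i.
Definition prod_scale (a : R) (x : prodmod) : prodmod := fun i => a *: x i.

Lemma prod_addA : associative prod_add.
Proof. by move=> x y z; apply: functional_extensionality_dep => i; exact: addrA. Qed.
Lemma prod_addC : commutative prod_add.
Proof. by move=> x y; apply: functional_extensionality_dep => i; exact: addrC. Qed.
Lemma prod_add0 : left_id prod_zero prod_add.
Proof. by move=> x; apply: functional_extensionality_dep => i; exact: add0r. Qed.
Lemma prod_addN : left_inverse prod_zero prod_opp prod_add.
Proof. by move=> x; apply: functional_extensionality_dep => i; exact: addNr. Qed.
HB.instance Definition _ :=
  GRing.isZmodule.Build prodmod prod_addA prod_addC prod_add0 prod_addN.

Lemma prod_scaleA a b x : prod_scale a (prod_scale b x) = prod_scale (a * b) x.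
Proof. by apply: functional_extensionality_dep => i; exact: scalerA. Qed.
Lemma prod_scale1 : left_id 1 prod_scale.
Proof. by move=> x; apply: functional_extensionality_dep => i; exact: scale1r. Qed.
Lemma prod_scaleDr : right_distributive prod_scale +%R.
Proof. by move=> a x y; apply: functional_extensionality_dep => i; exact: scalerDr. Qed.
Lemma prod_scaleDl x : {morph prod_scale^~ x : a b / a + b}.
Proof. by move=> a b; apply: functional_extensionality_dep => i; exact: scalerDl. Qed.
HB.instance Definition _ := GRing.Zmodule_isLmodule.Build R prodmod
  prod_scaleA prod_scale1 prod_scaleDr prod_scaleDl.

Lemma proj_lin i : is_linear (fun x : prodmod => x i).
Proof. by []. Qed.

Lemma prod_pp_eqs {n} (phi : ppf R n) (x : 'I_n -> prodmod) y :
  (forall i, pp_eqs phi (fun a => x a i) (fun l => y l i)) -> pp_eqs phi x y.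
Proof.
move=> Hxy r; apply: functional_extensionality_dep => i.
have Hproj := proj_lin i; rewrite (linD Hproj) !(lin_sum Hproj).
under eq_bigr do rewrite (linZ Hproj).
by under [X in _ + X]eq_bigr do rewrite (linZ Hproj); exact: Hxy.
Qed.

End Product.

Section PureProjectiveMittagLeffler.
Context {R : pzRingType} {P : lmodType R}.

Record wtuple := WTuple {
  wt_n : nat; wt_phi : ppf R wt_n; wt_x : 'I_wt_n -> P;
  wt_y : 'I_(pp_m wt_phi) -> P; wt_ok : pp_eqs wt_phi wt_x wt_y }.
HB.instance Definition _ := gen_eqMixin wtuple.

Definition wt_size (j : wtuple) : nat := wt_n j + pp_m (wt_phi j).

(* y, read as free variables followed by witnesses, satisfies the equations
   of the formula of j. *)
Definition wt_eqs {M : lmodType R} (j : wtuple) (y : 'I_(wt_size j) -> M) : Prop :=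
  pp_eqs (wt_phi j) (fun a => y (lshift _ a)) (fun b => y (rshift _ b)).

Definition lincomb {M : lmodType R} (js : seq wtuple) (c : wtuple -> nat -> R)
    (b : forall j, 'I_(wt_size j) -> M) : M :=
  \sum_(j <- js) \sum_(l < wt_size j) c j l *: b j l.

Lemma lincomb_map {U V : lmodType R} {f : U -> V} js c b : is_linear f ->
  f (lincomb js c b) = lincomb js c (fun j l => f (b j l)).
Proof.
move=> f_lin; rewrite /lincomb (lin_sum f_lin); apply: eq_bigr => j _.
by rewrite (lin_sum f_lin); apply: eq_bigr => l _; rewrite (linZ f_lin).
Qed.

Lemma eq_lincomb {M : lmodType R} js c {b b' : forall j, 'I_(wt_size j) -> M} :
  {in js, forall j, b j = b' j} -> lincomb js c b = lincomb js c b'.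
Proof. by move=> E; apply: eq_big_seq => j /E ->. Qed.

Lemma lincombD_coef {M : lmodType R} js c1 c2 a (b : forall j, 'I_(wt_size j) -> M) :
  a *: lincomb js c1 b + lincomb js c2 b = lincomb js (fun j l => a * c1 j l + c2 j l) b.
Proof.
rewrite /lincomb scaler_sumr -big_split; apply: eq_bigr => j _.
by rewrite scaler_sumr -big_split; apply: eq_bigr => l _; rewrite scalerA scalerDl.
Qed.

Lemma lincomb_widen {M : lmodType R} {js js' c} {b : forall j, 'I_(wt_size j) -> M} :
  uniq js -> uniq js' -> {subset js <= js'} ->
  lincomb js c b = lincomb js' (fun j l => if j \in js then c j l else 0) b.
Proof.
move=> ujs ujs' js_sub.
have js_perm : perm_eq js [seq j <- js' | j \in js].
  apply: uniq_perm => //; first exact: filter_uniq.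
  by move=> j; rewrite mem_filter andb_idr //; exact: js_sub.
rewrite /lincomb [RHS](bigID (mem js)) /= [X in _ + X]big1 ?addr0 => [|j /negbTE ->].
  rewrite (perm_big _ js_perm) big_filter; apply: eq_bigr => j jin.
  by apply: eq_bigr => l _; rewrite jin.
by apply: big1 => l _; rewrite scale0r.
Qed.

(* "z is a combination, with coefficients T, of tuples b j satisfying the
   equations of j for j in js" is pp-definable (induction on js; the new
   tuple b j becomes a block of witnesses). *)
Lemma lincomb_definable {N} (T : 'I_N -> wtuple -> nat -> R) {js : seq wtuple} :
  uniq js ->
  pp_definable (fun M (z : 'I_N -> M) => exists b : forall j, 'I_(wt_size j) -> M,
     (forall j, j \in js -> wt_eqs j (b j)) /\ forall i, z i = lincomb js (T i) b).
Proof.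
elim: js => [_ | j js IH /andP [j_notin ujs]].
  apply: (pp_definable_eqv (pp_definable_lin (1%:M : 'M[R]_N))) => M z.
  split=> [Hz | [b [_ Hz]] i]; last by rewrite sum_idmx Hz /lincomb big_nil.
  by exists (fun _ _ => 0); split => // i; have := Hz i; rewrite sum_idmx /lincomb big_nil.
pose C := row_mx (1%:M : 'M[R]_N) (\matrix_(i < N, l < wt_size j) - T i j l).
have Hj := pp_definable_reidx (@rshift N (wt_size j)) (pp_definable_eqs (wt_phi j)).
have HC := pp_definable_subst C (IH ujs).
apply: (pp_definable_eqv (pp_definable_ex (pp_definable_conj Hj HC))) => M z /=.
have CE (y : 'I_(wt_size j) -> M) i :
    \sum_l C i l *: tcat z y l = z i - \sum_(l < wt_size j) T i j l *: y l.
  rewrite sum_tcat -sumrN -[z i]sum_idmx.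
  by congr (_ + _); apply: eq_bigr => l _; rewrite ?row_mxEl ?row_mxEr // mxE scaleNr.
have Ey (y : 'I_(wt_size j) -> M) :
    pp_eqs (wt_phi j) (fun a => tcat z y (rshift N (lshift _ a)))
                      (fun b => tcat z y (rshift N (rshift _ b))) = wt_eqs j y.
  by congr pp_eqs; apply: funext => a; rewrite tcatr.
split.
- case=> y []; rewrite Ey => Hy [b [Hb Hz]].
  have Eb : {in js, forall j', dfwith b y j' = b j'}.
    by move=> j' j'_in; rewrite dfwith_out //; apply: contraNneq j_notin => ->.
  exists (dfwith b y); split.
    move=> j'; rewrite inE => /orP [/eqP -> | j'_in]; first by rewrite dfwith_in.
    by rewrite Eb //; exact: Hb.
  move=> i; rewrite /lincomb big_cons dfwith_in -/(lincomb js (T i) _) (eq_lincomb _ _ Eb).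
  by rewrite -Hz CE addrC subrK.
- case=> b [Hb Hz]; exists (b j); split; first by rewrite Ey; apply: Hb; rewrite inE eqxx.
  exists b; split=> [j' j'_in | i]; first by apply: Hb; rewrite inE j'_in orbT.
  by rewrite CE Hz /lincomb big_cons addrC addKr.
Qed.

Record realization := Realization {
  r_mod : lmodType R; r_tup : forall j, 'I_(wt_size j) -> r_mod }.

Definition valid (r : realization) : Prop := forall j, wt_eqs j (r_tup r j).

Definition tautological : realization :=
  Realization P (fun j => tcat (wt_x j) (wt_y j)).

Lemma valid_tautological : valid tautological.
Proof.
move=> j i; rewrite /wt_eqs /=; under eq_bigr do rewrite tcatl.
by under [X in _ + X]eq_bigr do rewrite tcatr; exact: wt_ok.
Qed.

(* A potential failure of atomicity: coefficients expressing an f_n-tuple as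
   a combination of tuples in f_js, and a formula f_psi; a realization
   refutes it if the combination of its interpretations violates f_psi. *)
Record failure := Failure {
  f_n : nat; f_js : seq wtuple;
  f_coef : 'I_f_n -> wtuple -> nat -> R; f_psi : ppf R f_n }.

Definition refutes (k : failure) (r : realization) : Prop :=
  valid r /\ ~ pp_holds (f_psi k) (fun i => lincomb (f_js k) (f_coef k i) (r_tup r)).

Definition counterexample (k : failure) : realization :=
  match pselect (exists r, refutes k r) with
  | left ex_r => sval (cid ex_r)
  | right _ => tautological
  end.

Lemma valid_counterexample (k : failure) : valid (counterexample k).
Proof.
rewrite /counterexample; case: pselect => [ex_r | _]; last exact: valid_tautological.
by case: (svalP (cid ex_r)).
Qed.

Lemma counterexample_universal (k : failure) :
  pp_holds (f_psi k) (fun i => lincomb (f_js k) (f_coef k i) (r_tup (counterexample k))) ->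
  forall (M : lmodType R) (b : forall j, 'I_(wt_size j) -> M),
  (forall j, j \in f_js k -> wt_eqs j (b j)) ->
  pp_holds (f_psi k) (fun i => lincomb (f_js k) (f_coef k i) b).
Proof.
move=> psi_cex M b Hb; apply: contrapT => psi_b.
pose b' j := if j \in f_js k then b j else fun _ => 0.
have Eb : {in f_js k, forall j, b' j = b j} by move=> j jin; rewrite /b' jin.
have ex_r : exists r, refutes k r.
  exists (Realization M b'); split => [j | /=].
    by rewrite /= /b'; case: ifP => [/Hb | _] //; exact: pp_eqs0.
  suff -> : (fun i => lincomb (f_js k) (f_coef k i) b') =
            (fun i => lincomb (f_js k) (f_coef k i) b) by [].
  by apply: funext => i; exact: eq_lincomb.
move: psi_cex; rewrite /counterexample; case: pselect => // ex_r'.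
by case: (svalP (cid ex_r')).
Qed.

(* The cover lives in the product of P (tautological factor) and of one
   counterexample for every potential failure; the generic tuple of j
   collects all interpretations of j and satisfies its equations. *)
Definition factor (o : option failure) : realization :=
  if o is Some k then counterexample k else tautological.

Definition D : lmodType R := prodmod (fun o => r_mod (factor o)).

Definition generic (j : wtuple) (l : 'I_(wt_size j)) : D := fun o => r_tup (factor o) j l.

Lemma generic_eqs (j : wtuple) : wt_eqs j (generic j).
Proof.
apply: prod_pp_eqs => -[k|]; [exact: valid_counterexample | exact: valid_tautological].
Qed.

(* The span of the generic tuples: combinations over duplicate-free lists.
   It is closed under the module operations (merge the two lists). *)
Definition in_span (w : D) : Prop :=
  exists js c, uniq js /\ w = lincomb js c generic.

Definition spanb : {pred D} := fun w => `[< in_span w >].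

Lemma spanb_closed : submod_closed spanb.
Proof.
split=> [|a _ _ /asboolP [js1 [c1 [u1 ->]]] /asboolP [js2 [c2 [u2 ->]]]]; apply/asboolP.
  by exists [::], (fun _ _ => 0); split => //; rewrite /lincomb big_nil.
pose js := undup (js1 ++ js2).
have ujs : uniq js := undup_uniq _.
have sub1 : {subset js1 <= js} by move=> j jin; rewrite mem_undup mem_cat jin.
have sub2 : {subset js2 <= js} by move=> j jin; rewrite mem_undup mem_cat jin orbT.
exists js, (fun j l => a * (if j \in js1 then c1 j l else 0) + (if j \in js2 then c2 j l else 0)).
by rewrite (lincomb_widen u1 ujs sub1) (lincomb_widen u2 ujs sub2) lincombD_coef.
Qed.

HB.instance Definition _ :=
  GRing.isSubmodClosed.Build R D spanb (GRing.submod_closed_semi spanb_closed).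

Record cover := Cover { cover_val : D; _ : spanb cover_val }.
HB.instance Definition _ := [isSub for cover_val].
HB.instance Definition _ := [Choice of cover by <:].
HB.instance Definition _ := [SubChoice_isSubLmodule of cover by <:].

Lemma val_lin : is_linear (val : cover -> D).
Proof. exact: linearP. Qed.

Lemma generic_in_span (j : wtuple) (l : 'I_(wt_size j)) : spanb (generic j l).
Proof.
apply/asboolP; exists [:: j], (fun _ l' => if l' == val l then 1 else 0); split => //.
rewrite /lincomb big_seq1 (bigD1 l) //= eqxx scale1r big1 ?addr0 // => l' /negbTE nl.
by rewrite val_eqE nl scale0r.
Qed.

Definition cover_proj (u : cover) : P := val u None.

Lemma cover_proj_lin : is_linear cover_proj.
Proof. by move=> a x y; rewrite /cover_proj val_lin. Qed.

Lemma cover_proj_lifts : lifts_pp cover_proj.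
Proof.
move=> n chi x [y Hxy]; pose j := @WTuple n chi x y Hxy.
pose g l : cover := @Cover (generic j l) (generic_in_span j l).
exists (fun a => g (lshift _ a)); split => [a | ]; first exact: tcatl.
exists (fun b => g (rshift _ b)); apply: (pp_eqs_inj val_lin val_inj).
exact: (generic_eqs j).
Qed.

Lemma cover_proj_pure : pure_epi cover_proj.
Proof. exact: lifts_pp_pure_epi cover_proj_lin cover_proj_lifts. Qed.

Lemma cover_decomposition {n} (u : 'I_n -> cover) :
  exists js c, uniq js /\ forall i, val (u i) = lincomb js (c i) generic.
Proof.
have /choice [rep Hrep] : forall i, exists p : seq wtuple * (wtuple -> nat -> R),
    uniq p.1 /\ val (u i) = lincomb p.1 p.2 generic.
  by move=> i; have /asboolP [js [c Hc]] := valP (u i); exists (js, c).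
pose js := undup (flatten [seq (rep i).1 | i <- enum 'I_n]).
have ujs : uniq js := undup_uniq _.
have sub i : {subset (rep i).1 <= js}.
  by move=> j jin; rewrite mem_undup; apply/flatten_mapP; exists i; rewrite ?mem_enum.
exists js, (fun i j l => if j \in (rep i).1 then (rep i).2 j l else 0); split => // i.
by have [u_i ->] := Hrep i; exact: lincomb_widen.
Qed.

(* Pure-projective modules are Mittag-Leffler: a section of the cover writes
   a tuple of P as a combination of generic tuples, and the pp formula
   describing such combinations is below every formula of its pp-type,
   since each failure is already tested in the corresponding factor. *)
Lemma pure_projective_mittag_leffler : pure_projective P -> mittag_leffler P.
Proof.
move=> P_pproj n s.
have [h [h_lin hK]] := P_pproj cover P cover_proj cover_proj_pure id (fun _ _ _ => erefl).
have [js [c [ujs Ehs]]] := cover_decomposition (fun i => h (s i)).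
have [phi Hphi] := lincomb_definable c ujs.
exists phi; split.
- apply/Hphi; exists (r_tup tautological); split => [j _ | i]; first exact: valid_tautological.
  by rewrite -[s i]hK /cover_proj Ehs (lincomb_map _ _ _ (proj_lin _ None)).
- move=> psi psi_s N _ x /Hphi [b [Hb Ex]].
  have -> : x = (fun i => lincomb js (c i) b) by apply: funext.
  pose k := @Failure n js c psi.
  apply: (@counterexample_universal k) => //.
  have := pp_holds_map (proj_lin _ (Some k)) (pp_holds_map val_lin (pp_holds_map h_lin psi_s)).
  by congr pp_holds; apply: funext => i; rewrite Ehs (lincomb_map _ _ _ (proj_lin _ _)).
Qed.

End PureProjectiveMittagLeffler.

Theorem theorem5p10 (R : pzRingType) (L : mclass R) :
  purely_resolving L ->
  forall M : lmodType R, L M -> atomic L M -> mittag_leffler M.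
Proof.
case=> B [B_pproj _ L_PGen] M LM M_atomic n m.
have [I [Bi [S [iota [p [Bi_B [S_dsum p_pure]]]]]]] := (L_PGen M).1 LM.
have LS : L S.
  apply/L_PGen; exists I, Bi, S, iota, (fun x => x).
  by split; last split; [| exact: S_dsum | exact: id_pure_epi].
have S_pproj : pure_projective S := dsum_pure_projective S_dsum (fun i => B_pproj _ (Bi_B i)).
have [phi [phi_m phi_min]] := M_atomic n m.
have [s [ps phi_s]] := pure_epi_lifts_pp p_pure _ _ _ phi_m.
have [phi' [phi'_s phi'_min]] := pure_projective_mittag_leffler S_pproj _ s.
exists phi'; split => [| psi psi_m].
  have -> : m = (fun j => p (s j)) by apply: funext => j; rewrite ps.
  by case: p_pure => p_lin _ _; exact: (pp_holds_map p_lin phi'_s).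
by apply: phi'_min; exact: phi_min psi psi_m S LS s phi_s.
Qed.
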